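(* Let $f$ be a non-degenerate Hermitian or quadratic form of finite Witt index $n\ge2$ on a vector space $V$ over a field $\mathbb F$, with polar space $\mathcal P=\mathcal P(f)$ naturally embedded in $\mathrm{PG}(V)$, and assume $\mathcal P$ is not a grid (i.e. not the case $f$ quadratic, $n=2$, $\dim V=4$). Let $X$ be a nice subspace of $\mathcal P$. Then $\langle X\rangle_{\mathrm{PG}(V)}\cap\mathcal P=X$.
   Context: Points of $\mathcal P(f)$ are the 1-spaces of $V$ isotropic (Hermitian case) or singular (quadratic case) for $f$; lines are the totally isotropic/singular 2-spaces. A subspace of $\mathcal P$ is a set of points containing every line meeting it in at least two points. A nice subspace of $\mathcal P$ is a subspace containing two mutually disjoint maximal singular subspaces of $\mathcal P$ (equivalently, $\mathcal P$ induces on it a non-degenerate polar space of rank $n$). $\langle X\rangle_{\mathrm{PG}(V)}$ is the projective subspace of $\mathrm{PG}(V)$ spanned by the points of $X$. For quadratic $q$, non-degenerate means $q(v)\ne0$ for all nonzero $v$ in the radical of its bilinearization. *)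

From HB Require Import structures.
From mathcomp Require Import all_boot all_order all_algebra.
Set Implicit Arguments. Unset Strict Implicit. Unset Printing Implicit Defensive.
Import GRing.Theory.
Local Open Scope ring_scope.

Section Polar.
Variables (F : fieldType) (V : lmodType F).

Inductive pform : Type :=
  | Herm of (F -> F) & (V -> V -> F)
  | Quad of (V -> F).

Definition bilin (q : V -> F) (u w : V) : F := q (u + w) - q u - q w.

Definition is_herm_form (sigma : F -> F) (f : V -> V -> F) : Prop :=
  [/\ (forall a b, sigma (a + b) = sigma a + sigma b),
      (forall a b, sigma (a * b) = sigma a * sigma b),
      (forall a, sigma (sigma a) = a) &
      (exists a, sigma a <> a)] /\
  (forall a x y z, f (a *: x + y) z = a * f x z + f y z) /\
  (forall x y, f y x = sigma (f x y)).

Definition is_quad_form (q : V -> F) : Prop :=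
  (forall a v, q (a *: v) = a ^+ 2 * q v) /\
  (forall a u u' w, bilin q (a *: u + u') w = a * bilin q u w + bilin q u' w).

Definition is_pform (phi : pform) : Prop :=
  match phi with
  | Herm sigma f => is_herm_form sigma f
  | Quad q => is_quad_form q
  end.

Definition pform_nondeg (phi : pform) : Prop :=
  match phi with
  | Herm _ f => forall v, (forall w, f v w = 0) -> v = 0
  | Quad q => forall v, (forall w, bilin q v w = 0) -> q v = 0 -> v = 0
  end.

Definition psingular (phi : pform) (v : V) : Prop :=
  match phi with
  | Herm _ f => f v v = 0
  | Quad q => q v = 0
  end.

Definition porth (phi : pform) (u w : V) : Prop :=
  match phi with
  | Herm _ f => f u w = 0
  | Quad q => bilin q u w = 0
  end.

Definition is_vsub (W : V -> Prop) : Prop :=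
  W 0 /\ forall a u w, W u -> W w -> W (a *: u + w).

Definition lspan (S : V -> Prop) (v : V) : Prop :=
  exists k (c : 'I_k -> F) (x : 'I_k -> V),
    (forall i, S (x i)) /\ v = \sum_(i < k) c i *: x i.

Definition lin_indep k (x : 'I_k -> V) : Prop :=
  forall c : 'I_k -> F, \sum_(i < k) c i *: x i = 0 -> forall i, c i = 0.

Definition has_dim (W : V -> Prop) (k : nat) : Prop :=
  exists x : 'I_k -> V, lin_indep x /\
    forall v, W v <-> lspan (fun u => exists i, u = x i) v.

Definition tot_singular (phi : pform) (W : V -> Prop) : Prop :=
  forall u w, W u -> W w -> psingular phi u /\ porth phi u w.

Definition witt_index (phi : pform) (n : nat) : Prop :=
  (exists W, is_vsub W /\ tot_singular phi W /\ has_dim W n) /\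
  (forall W, is_vsub W -> tot_singular phi W ->
     forall x : 'I_n.+1 -> V, (forall i, W (x i)) -> ~ lin_indep x).

(* maximal totally psingular vector subspaces = maximal psingular subspaces of P *)
Definition max_singular (phi : pform) (W : V -> Prop) : Prop :=
  [/\ is_vsub W, tot_singular phi W &
      forall W', is_vsub W' -> tot_singular phi W' ->
        (forall v, W v -> W' v) -> forall v, W' v -> W v].

(* Sets of points of PG(V): X is a predicate on vectors, the point <v>
   belongs to the set iff X v; X contains only nonzero vectors and is
   closed under nonzero scalar multiples. *)
Definition is_pointset (X : V -> Prop) : Prop :=
  (forall v, X v -> v <> 0) /\ (forall a v, X v -> a <> 0 -> X (a *: v)).

(* subspace of the polar space P(phi): a set of points of P containing every
   line (totally psingular 2-space) meeting it in at least two points *)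
Definition polar_subspace (phi : pform) (X : V -> Prop) : Prop :=
  [/\ is_pointset X,
      (forall v, X v -> psingular phi v) &
      (forall u w, X u -> X w -> lin_indep [ffun i : 'I_2 => if i == ord0 then u else w] ->
         porth phi u w ->
         forall a b, a *: u + b *: w <> 0 -> X (a *: u + b *: w))].

Definition nice_subspace (phi : pform) (X : V -> Prop) : Prop :=
  polar_subspace phi X /\
  exists W1 W2, [/\ max_singular phi W1, max_singular phi W2,
    (forall v, W1 v -> W2 v -> v = 0),
    (forall v, W1 v -> v <> 0 -> X v) &
    (forall v, W2 v -> v <> 0 -> X v)].

Definition is_quad (phi : pform) : Prop :=
  match phi with Quad _ => True | Herm _ _ => False end.

End Polar.

(* Let W1, W2 be disjoint maximal singular subspaces whose points lie in X.
   Call a vector subspace Y "saturated" when every nonzero singular vector of Y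
   represents a point of X.  We show that the span of W1, W2 and finitely many
   points of X is saturated, by induction on the number of points:
   - base [saturated_W12]: a singular w1 + w2 (wi in Wi) is on a line of X,
     except in the Hermitian case with b(w1, w2) != 0, where w1 + w2 is put on a
     secant line through two points of X built from norm-one scalars [twist_base];
   - step [saturated_extend]: adjoining a point x of X keeps Y saturated,
     by comparing the functionals b(_, y + x) and b(_, x) on W2 [extension_step].  The rank n >= 2 is only used to find two independent vectors
   in W1 [max_singular_free2]. *)

From HB Require Import structures.
From mathcomp Require Import all_boot all_order all_algebra.
From mathcomp Require Import ring.
From Stdlib Require Import Classical_Prop.
Set Implicit Arguments. Unset Strict Implicit. Unset Printing Implicit Defensive.
Import GRing.Theory.
Local Open Scope ring_scope.

Section LinearAlgebra.
Variables (F : fieldType) (V : lmodType F).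

Section SubspaceClosure.
Variable W : V -> Prop.
Hypothesis HW : is_vsub W.

Lemma vsub0 : W 0. Proof. by case: HW. Qed.

Lemma vsubD u w : W u -> W w -> W (u + w).
Proof. by move=> Wu Ww; have := HW.2 1 u w Wu Ww; rewrite scale1r. Qed.

Lemma vsubZ a u : W u -> W (a *: u).
Proof. by move=> Wu; have := HW.2 a u 0 Wu vsub0; rewrite addr0. Qed.

Lemma vsubN u : W u -> W (- u).
Proof. by move=> Wu; rewrite -scaleN1r; apply: vsubZ. Qed.

Lemma vsubB u w : W u -> W w -> W (u - w).
Proof. by move=> Wu Ww; apply: vsubD => //; apply: vsubN. Qed.

End SubspaceClosure.

Definition vsum (A B : V -> Prop) (v : V) : Prop :=
  exists a b, [/\ A a, B b & v = a + b].

Lemma vsum_vsub A B : is_vsub A -> is_vsub B -> is_vsub (vsum A B).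
Proof.
move=> vA vB; split; first by exists 0, 0; rewrite addr0; split=> //; exact: vsub0.
move=> c u w [u1 [u2 [A1 B2 ->]]] [w1 [w2 [A1' B2' ->]]].
exists (c *: u1 + w1), (c *: u2 + w2); split; [exact: vA.2 | exact: vB.2 |].
by rewrite scalerDr addrACA.
Qed.

Lemma vsuml A B v : is_vsub B -> A v -> vsum A B v.
Proof. by move=> vB Av; exists v, 0; rewrite addr0; split=> //; exact: vsub0. Qed.

Lemma vsumr A B v : is_vsub A -> B v -> vsum A B v.
Proof. by move=> vA Bv; exists 0, v; rewrite add0r; split=> //; exact: vsub0. Qed.

Definition vline (x : V) (v : V) : Prop := exists a, v = a *: x.

Lemma vline_vsub x : is_vsub (vline x).
Proof.
split; first by exists 0; rewrite scale0r.
by move=> c _ _ [a ->] [a' ->]; exists (c * a + a'); rewrite scalerDl scalerA.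
Qed.

Definition free2 (u w : V) : Prop :=
  forall a c : F, a *: u + c *: w = 0 -> a = 0 /\ c = 0.

Lemma free2C u w : free2 u w -> free2 w u.
Proof. by move=> h a c e; rewrite addrC in e; have [] := h _ _ e. Qed.

Lemma free2_neq0 u w : free2 u w -> u <> 0.
Proof.
move=> h u0; have [|/eqP] := h 1 0; last by rewrite oner_eq0.
by rewrite u0 scaler0 scale0r addr0.
Qed.

Lemma free2_comb_neq0 u w a c :
  free2 u w -> (a != 0) || (c != 0) -> a *: u + c *: w <> 0.
Proof. by move=> h /orP[] /eqP nz e; have [] := h _ _ e. Qed.

Lemma free2_lin_indep u w :
  free2 u w -> lin_indep [ffun i : 'I_2 => if i == ord0 then u else w].
Proof.
move=> h c; rewrite !big_ord_recr big_ord0 /= !ffunE /= add0r => /h [c0 c1].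
by case=> [[|[|k]] lt_k] //; [rewrite -c0 | rewrite -c1]; congr c; apply: val_inj.
Qed.

Lemma lin_indep_free2 k (x : 'I_k -> V) i j :
  lin_indep x -> i != j -> free2 (x i) (x j).
Proof.
move=> li ij a c e.
pose cc l := if l == i then a else if l == j then c else 0.
have sum_cc : \sum_(l < k) cc l *: x l = a *: x i + c *: x j.
  rewrite (bigD1 i) //= (bigD1 (P := fun l => l != i) j) 1?eq_sym //= big1 ?addr0.
    by rewrite /cc eqxx eq_sym (negbTE ij) eqxx.
  by move=> l /andP[li' lj]; rewrite /cc (negbTE li') (negbTE lj) scale0r.
have := li cc; rewrite sum_cc => /(_ e) c0.
split; first by have := c0 i; rewrite /cc eqxx.
by have := c0 j; rewrite /cc eq_sym (negbTE ij) eqxx.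
Qed.

Lemma free2_shear v u (c : F) : free2 v u -> c != 1 -> free2 (v + u) (v + c *: u).
Proof.
move=> fr c1 a a' e.
have [] := fr (a + a') (a + a' * c).
  by rewrite -e !scalerDr !scalerDl !scalerA addrACA.
move=> s0 s1; have : a' * (c - 1) = (a + a' * c) - (a + a') by ring.
rewrite s0 s1 subrr => /eqP; rewrite mulf_eq0 subr_eq0 (negbTE c1) orbF => /eqP a'0.
by split=> //; move: s0; rewrite a'0 addr0.
Qed.

Lemma shear_decomp (v u : V) (c : F) :
  c != 1 -> v = (- c / (1 - c)) *: (v + u) + (1 / (1 - c)) *: (v + c *: u).
Proof.
move=> c1; have c1' : 1 - c != 0 by rewrite subr_eq0 eq_sym.
rewrite !scalerDr scalerA addrACA -!scalerDl.
have -> : - c / (1 - c) + 1 / (1 - c) = 1 by field.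
have -> : - c / (1 - c) + 1 / (1 - c) * c = 0 by field.
by rewrite scale1r scale0r addr0.
Qed.

Lemma free2_notin (Y : V -> Prop) y x :
  is_vsub Y -> Y y -> ~ Y x -> y <> 0 -> free2 y x.
Proof.
move=> vY Yy nYx y0 a c e.
have c0 : c = 0.
  apply: NNPP => /eqP c0; apply: nYx.
  have cx : c *: x = - (a *: y) by apply: (addrI (a *: y)); rewrite e subrr.
  have -> : x = c^-1 *: - (a *: y) by rewrite -cx scalerA mulVf ?scale1r.
  by apply: vsubZ => //; apply: vsubN => //; apply: vsubZ.
split=> //; move/eqP: e; rewrite c0 scale0r addr0 scaler_eq0.
by case/orP=> /eqP.
Qed.

Lemma disjoint_sum0 (A B : V -> Prop) u w :
  is_vsub B -> (forall v, A v -> B v -> v = 0) -> A u -> B w -> u + w = 0 -> u = 0.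
Proof.
move=> vB AB Au Bw e; apply: AB => //.
by rewrite -[u]addr0 -(subrr w) addrA e add0r; apply: vsubN.
Qed.

Definition is_lfun (al : V -> F) : Prop :=
  forall a u w, al (a *: u + w) = a * al u + al w.

Section LinearFunctional.
Variable al : V -> F.
Hypothesis Hal : is_lfun al.

Lemma lfun0 : al 0 = 0.
Proof.
have := Hal 1 0 0; rewrite scale1r addr0 mul1r => h.
by apply: (addrI (al 0)); rewrite -h addr0.
Qed.

Lemma lfunZ a u : al (a *: u) = a * al u.
Proof. by rewrite -[a *: u]addr0 Hal lfun0 addr0. Qed.

Lemma exists_kernel_vector (W : V -> Prop) e1 e2 :
  is_vsub W -> W e1 -> W e2 -> free2 e1 e2 -> exists e, [/\ W e, e <> 0 & al e = 0].
Proof.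
move=> vW W1 W2 fr.
have [e0|ne] := eqVneq (al e2 *: e1 + (- al e1) *: e2) 0.
  have [_ /eqP] := fr _ _ e0; rewrite oppr_eq0 => /eqP a0.
  by exists e1; split => //; exact: free2_neq0 fr.
exists (al e2 *: e1 + (- al e1) *: e2); split; last first.
- by rewrite Hal lfunZ mulNr mulrC subrr.
- exact/eqP.
- by apply: vW.2 => //; apply: vsubZ.
Qed.

Lemma lfun_free2 u e : al u != 0 -> al e = 0 -> e <> 0 -> free2 u e.
Proof.
move=> ue e0 ne a c h.
have := congr1 al h; rewrite Hal lfunZ e0 mulr0 addr0 lfun0 => /eqP.
rewrite mulf_eq0 (negbTE ue) orbF => /eqP a0.
split=> //; move/eqP: h; rewrite a0 scale0r add0r scaler_eq0.
by case/orP=> /eqP.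
Qed.

Lemma lfun_proportional (be : V -> F) (P : V -> Prop) w0 :
  is_lfun be -> is_vsub P -> P w0 -> al w0 != 0 ->
  (forall w, P w -> al w = 0 -> be w = 0) ->
  exists lam, forall w, P w -> be w = lam * al w.
Proof.
move=> Hbe vP Pw0 nz ker; exists (be w0 / al w0) => w Pw.
have := ker ((- (al w / al w0)) *: w0 + w) (vP.2 _ _ _ Pw0 Pw).
rewrite Hal Hbe mulNr divfK // addNr => /(_ erefl) /eqP.
by rewrite mulNr addrC subr_eq0 => /eqP ->; field.
Qed.

End LinearFunctional.
End LinearAlgebra.

Definition pf_sigma (F : fieldType) (V : lmodType F) (phi : pform V) : F -> F :=
  match phi with Herm s _ => s | Quad _ => id end.

Definition pf_form (F : fieldType) (V : lmodType F) (phi : pform V) : V -> V -> F :=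
  match phi with Herm _ f => f | Quad q => bilin q end.

Section PolarForm.
Variables (F : fieldType) (V : lmodType F) (phi : pform V).
Hypothesis Hphi : is_pform phi.
Local Notation sg := (pf_sigma phi).
Local Notation b := (pf_form phi).
Local Notation sing := (psingular phi).

Lemma porth_form u w : porth phi u w <-> b u w = 0.
Proof. by case: phi. Qed.

Lemma sigmaD a c : sg (a + c) = sg a + sg c.
Proof. by move: Hphi; case: phi => //= s f [[]]. Qed.

Lemma sigmaM a c : sg (a * c) = sg a * sg c.
Proof. by move: Hphi; case: phi => //= s f [[]]. Qed.

Lemma sigmaK a : sg (sg a) = a.
Proof. by move: Hphi; case: phi => //= s f [[]]. Qed.

Lemma sigma0 : sg 0 = 0.
Proof. by apply: (addrI (sg 0)); rewrite -sigmaD !addr0. Qed.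

Lemma sigma_eq0 a : (sg a == 0) = (a == 0).
Proof. by apply/eqP/eqP => [h|->]; [rewrite -(sigmaK a) h sigma0 | exact: sigma0]. Qed.

Lemma sigma1 : sg 1 = 1.
Proof.
have nz : sg 1 != 0 by rewrite sigma_eq0 oner_neq0.
by apply: (mulfI nz); rewrite -sigmaM !mulr1.
Qed.

Lemma sigmaV a : sg a^-1 = (sg a)^-1.
Proof.
have [->|nz] := eqVneq a 0; first by rewrite invr0 sigma0 invr0.
have nz' : sg a != 0 by rewrite sigma_eq0.
by apply: (mulfI nz'); rewrite -sigmaM !mulfV // sigma1.
Qed.

Lemma sigmaN a : sg (- a) = - sg a.
Proof. by apply: (addrI (sg a)); rewrite -sigmaD !subrr sigma0. Qed.

Lemma form_lfun w : is_lfun (b ^~ w).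
Proof. by move: Hphi; case: phi => /= [s f [_ [h _]]|q [_ h]] a u u'; apply: h. Qed.

Lemma form_sym u w : b w u = sg (b u w).
Proof.
move: Hphi; case: phi => /= [s f [_ [_ h]]|q _]; first exact: h.
by rewrite /bilin (addrC w u) -!addrA (addrC (- q w)).
Qed.

Lemma form0l w : b 0 w = 0.
Proof. by have := lfun0 (form_lfun w). Qed.

Lemma formZl a u w : b (a *: u) w = a * b u w.
Proof. by have := lfunZ (form_lfun w) a u. Qed.

Lemma formDl u u' w : b (u + u') w = b u w + b u' w.
Proof. by have := form_lfun w 1 u u'; rewrite scale1r mul1r. Qed.

Lemma formZr a w u : b w (a *: u) = sg a * b w u.
Proof. by rewrite form_sym formZl sigmaM -form_sym. Qed.

Lemma formDr w u u' : b w (u + u') = b w u + b w u'.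
Proof. by rewrite form_sym formDl sigmaD -!form_sym. Qed.

Lemma form0r w : b w 0 = 0.
Proof. by rewrite form_sym form0l sigma0. Qed.

Lemma form_symeq0 u w : b u w = 0 -> b w u = 0.
Proof. by move=> h; rewrite form_sym h sigma0. Qed.

Lemma psingular_form v : sing v -> b v v = 0.
Proof.
move: Hphi; case: phi => /= [s f _ //|q [hq _] qv]; rewrite /bilin.
have -> : v + v = (1 + 1) *: v by rewrite scalerDl scale1r.
by rewrite hq qv mulr0 !subr0.
Qed.

Lemma psingular0 : sing 0.
Proof.
move: Hphi; case: phi => /= [s f [_ [lin _]]|q [hq _]].
  exact: (lfun0 (al := f^~ 0) (fun a u w => lin a u w 0)).
by have := hq 0 0; rewrite scaler0 expr0n mul0r.
Qed.

Lemma psingular_comb a u w :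
  sing u -> sing w -> b u w = 0 -> sing (a *: u + w).
Proof.
move=> su sw uw.
have iso : b (a *: u + w) (a *: u + w) = 0.
  rewrite formDl !formDr !formZl !formZr (psingular_form su) (psingular_form sw).
  by rewrite uw (form_symeq0 uw) !(mulr0, addr0).
have buw : b (a *: u) w = 0 by rewrite formZl uw mulr0.
move: Hphi su sw buw iso; case: phi => /= [s f _ _ _ _ -> //|q [hq _] su sw buw _].
have -> : q (a *: u + w) = bilin q (a *: u) w + q (a *: u) + q w by rewrite /bilin; ring.
by rewrite buw hq su sw mulr0 !addr0.
Qed.

Lemma psingular_scale a u : sing u -> sing (a *: u).
Proof.
by move=> su; rewrite -[a *: u]addr0; apply: psingular_comb (form0r u) => //; exact: psingular0.
Qed.

Lemma psingular_sum u w :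
  sing u -> sing w -> sing (u + w) -> b u w = 0 \/ exists a, sg a <> a.
Proof.
move: Hphi; case: phi => /= [s f [[_ _ _ nontriv] _] _ _ _|q _ su sw suw].
  by right.
by left; rewrite /bilin suw su sw !subr0.
Qed.

Lemma form_shear_orth v u c :
  b v v = 0 -> b v u = 0 -> b u u = 0 -> b (v + u) (v + c *: u) = 0.
Proof.
move=> vv vu uu.
by rewrite formDl !formDr !formZr vv vu (form_symeq0 vu) uu !(mulr0, addr0).
Qed.

Lemma max_singular_vsub W : max_singular phi W -> is_vsub W.
Proof. by case. Qed.

Lemma max_singular_sing W v : max_singular phi W -> W v -> sing v.
Proof. by case=> _ ts _ Wv; case: (ts v v Wv Wv). Qed.

Lemma max_singular_orth W u w : max_singular phi W -> W u -> W w -> b u w = 0.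
Proof. by case=> _ ts _ Wu Ww; case: (ts u w Wu Ww) => _ /porth_form. Qed.

(* A singular vector orthogonal to a maximal singular subspace W lies in W,
   since W + <s> is still totally singular. *)
Lemma max_singular_absorb W s :
  max_singular phi W -> sing s -> (forall w, W w -> b w s = 0) -> W s.
Proof.
case=> vW tsW maxW ss Ws.
have tsWs : tot_singular phi (vsum W (vline s)).
  move=> _ _ [w1 [_ [W1 [c1 ->] ->]]] [w2 [_ [W2 [c2 ->] ->]]].
  have [sw1 _] := tsW _ _ W1 W1; have [_ /porth_form o12] := tsW _ _ W1 W2.
  split; last apply/porth_form.
    by rewrite addrC; apply: psingular_comb => //; apply: form_symeq0; apply: Ws.
  rewrite formDl !formDr !formZl !formZr o12 (Ws _ W1) (form_symeq0 (Ws _ W2)).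
  by rewrite (psingular_form ss) !(mulr0, addr0).
apply: (maxW _ (vsum_vsub vW (vline_vsub s)) tsWs (fun v => vsuml (vline_vsub s))).
by apply: vsumr => //; exists 1; rewrite scale1r.
Qed.

Lemma max_singular_nonorth W u :
  max_singular phi W -> sing u -> ~ W u -> exists2 w, W w & b w u != 0.
Proof.
move=> MW su nWu; apply: NNPP => no; apply/nWu/(max_singular_absorb MW su) => w Ww.
by apply: NNPP => /eqP nz; apply: no; exists w.
Qed.

(* Otherwise W1 lies on a line <e>;
   a vector of W orthogonal to e is orthogonal to W1, hence lies in W1 = <e>,
   so e is in W, W is orthogonal to W1, and W is contained in W1. *)
Lemma max_singular_free2 W1 W a0 b0 :
  max_singular phi W1 -> is_vsub W -> tot_singular phi W -> W a0 -> W b0 ->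
  free2 a0 b0 -> exists e1 e2, [/\ W1 e1, W1 e2 & free2 e1 e2].
Proof.
move=> M1 vW tsW Wa Wb fr; apply: NNPP => no2.
have sW v : W v -> sing v by move=> Wv; case: (tsW v v Wv Wv).
have oW u v : W u -> W v -> b u v = 0 by move=> Wu Wv; case: (tsW u v Wu Wv) => _ /porth_form.
have [e [W1e ne]] : exists e, W1 e /\ e <> 0.
  apply: NNPP => no1; have W1a : W1 a0.
    apply: (max_singular_absorb M1 (sW _ Wa)) => w W1w.
    have -> : w = 0 by apply: NNPP => nw; apply: no1; exists w.
    exact: form0l.
  by apply: no1; exists a0; split=> //; exact: free2_neq0 fr.
have onl u : W1 u -> vline e u.
  move=> W1u; apply: NNPP => nu; apply: no2; exists e, u; split=> //.
  by apply: free2_notin (vline_vsub e) _ nu ne; exists 1; rewrite scale1r.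
have perp u : b u e = 0 -> forall w, W1 w -> b w u = 0.
  by move=> ue w /onl [k ->]; rewrite formZl (form_symeq0 ue) mulr0.
have [g [Wg ng ge]] := exists_kernel_vector (form_lfun e) vW Wa Wb fr.
have [k gk] := onl g (max_singular_absorb M1 (sW _ Wg) (perp g ge)).
have k0 : k != 0 by apply: contra_notN ng => /eqP k0; rewrite gk k0 scale0r.
have We : W e by rewrite -[e]scale1r -(mulVf k0) -scalerA -gk; apply: vsubZ.
apply: no2; exists a0, b0; split=> //.
  by apply: (max_singular_absorb M1 (sW _ Wa)); apply: perp; exact: oW.
by apply: (max_singular_absorb M1 (sW _ Wb)); apply: perp; exact: oW.
Qed.

Section NiceSubspace.
Variables (X W1 W2 : V -> Prop).
Hypotheses (HX : polar_subspace phi X)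
  (M1 : max_singular phi W1) (M2 : max_singular phi W2)
  (D12 : forall v, W1 v -> W2 v -> v = 0)
  (X1 : forall v, W1 v -> v <> 0 -> X v) (X2 : forall v, W2 v -> v <> 0 -> X v).
Variables (e1 e2 : V).
Hypotheses (W1e1 : W1 e1) (W1e2 : W1 e2) (fr12 : free2 e1 e2).

Let vW1 := max_singular_vsub M1.
Let vW2 := max_singular_vsub M2.

Lemma X_sing v : X v -> sing v.
Proof. by case: HX => _ h _; apply: h. Qed.

Lemma X_scale a v : X v -> a != 0 -> X (a *: v).
Proof. by case: HX => [[_ h] _ _] Xv /eqP; apply: h. Qed.

Lemma X_line u w a c : X u -> X w -> free2 u w -> b u w = 0 ->
  (a != 0) || (c != 0) -> X (a *: u + c *: w).
Proof.
case: HX => _ _ h Xu Xw fr uw nz; apply: h => //.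
- exact: free2_lin_indep.
- exact/porth_form.
- exact: free2_comb_neq0.
Qed.

Lemma X_add u w : X u -> X w -> free2 u w -> b u w = 0 -> X (u + w).
Proof.
by move=> Xu Xw fr uw; rewrite -[u]scale1r -[w]scale1r; apply: X_line; rewrite ?oner_eq0.
Qed.

Lemma free2_W12 u w : W1 u -> W2 w -> u <> 0 -> w <> 0 -> free2 u w.
Proof.
move=> W1u W2w nu nw a c e.
have au : a *: u = 0 by apply: (disjoint_sum0 vW2 D12 _ _ e); apply: vsubZ.
move/eqP: (au); rewrite scaler_eq0 => /orP[/eqP a0|/eqP //]; split=> //.
by move/eqP: e; rewrite au add0r scaler_eq0 => /orP[/eqP|/eqP].
Qed.

(* Since W1 has dimension at least 2, every vector is orthogonal to some
   nonzero vector of W1. *)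
Lemma W1_kernel x : exists e, [/\ W1 e, e <> 0 & b e x = 0].
Proof. by have := exists_kernel_vector (form_lfun x) vW1 W1e1 W1e2 fr12. Qed.

(* W2 separates independent vectors u, e of W1: some g in W2 is orthogonal to u
   but not to e.  Otherwise b(_, e) would be a multiple lam b(_, u) on W2, and
   e - sigma(lam) u would lie in W1 and W2. *)
Lemma W2_separates u e : W1 u -> W1 e -> free2 u e ->
  exists g, [/\ W2 g, b g u = 0 & b g e != 0].
Proof.
move=> W1u W1e fr; apply: NNPP => no.
have nW2u : ~ W2 u by move=> W2u; apply: (free2_neq0 fr); exact: D12.
have [w0 W2w0 nz] := max_singular_nonorth M2 (max_singular_sing M1 W1u) nW2u.
have [lam prop] : exists lam, forall g, W2 g -> b g e = lam * b g u.
  apply: (lfun_proportional (form_lfun u) (form_lfun e) vW2 W2w0 nz) => g W2g gu.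
  by apply: NNPP => /eqP ge; apply: no; exists g.
have W1s : W1 ((- sg lam) *: u + e) by apply: vW1.2.
have W2s : W2 ((- sg lam) *: u + e).
  apply: (max_singular_absorb M2 (max_singular_sing M1 W1s)) => w W2w.
  by rewrite formDr formZr sigmaN sigmaK prop // mulNr addNr.
have [_ /eqP] := fr (- sg lam) 1 (etrans (congr1 _ (scale1r e)) (D12 W1s W2s)).
by rewrite oner_eq0.
Qed.

Definition saturated (Y : V -> Prop) : Prop :=
  forall v, Y v -> v <> 0 -> sing v -> X v.

Section Extension.
Variable Y : V -> Prop.
Hypotheses (vY : is_vsub Y) (satY : saturated Y)
  (W1Y : forall v, W1 v -> Y v) (W2Y : forall v, W2 v -> Y v).

(* If y + x is orthogonal to x, then y is a point of Y orthogonal to x and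
   y + x lies on the line joining x and y. *)
Lemma extension_orth x y : X x -> ~ Y x -> Y y -> sing (y + x) ->
  b x (y + x) = 0 -> X (y + x).
Proof.
move=> Xx nYx Yy sp o.
have sx := X_sing Xx.
have ey : y = (-1) *: x + (y + x) by rewrite scaleN1r addrC addrK.
have sy : sing y by rewrite ey; apply: psingular_comb.
have [->|/eqP ny] := eqVneq y 0; first by rewrite add0r.
have yx : b y x = 0.
  by rewrite ey formDl formZl (psingular_form sx) mulr0 add0r (form_symeq0 o).
exact: X_add (satY Yy ny sy) Xx (free2_notin vY Yy nYx ny) yx.
Qed.

(* Otherwise a point w of Y orthogonal to x, but not to y + x, moves x along
   the line xw to a point x' with y + x = y' + x' and x' orthogonal to y + x. *)
Lemma extension_shift x y w : X x -> ~ Y x -> Y y -> sing (y + x) ->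
  Y w -> w <> 0 -> sing w -> b w x = 0 -> b w (y + x) != 0 -> X (y + x).
Proof.
move=> Xx nYx Yy sp Yw nw sw wx wp.
pose t := - (b x (y + x) / b w (y + x)).
have Xx' : X (x + t *: w).
  rewrite -[x]scale1r; apply: X_line; rewrite ?oner_eq0 //.
  - exact: satY.
  - exact: free2C (free2_notin vY Yw nYx nw).
  - exact: form_symeq0.
have nYx' : ~ Y (x + t *: w).
  by move=> Yx'; apply: nYx; rewrite -(addrK (t *: w) x); apply: vsubB => //; apply: vsubZ.
have split_t : (y - t *: w) + (x + t *: w) = y + x by rewrite addrACA addNr addr0.
rewrite -split_t; apply: extension_orth Xx' nYx' _ _ _; rewrite ?split_t //.
- by apply: vsubB => //; apply: vsubZ.
- by rewrite formDl formZl /t mulNr divfK // subrr.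
Qed.

Lemma extension_dichotomy x y : X x -> ~ Y x -> Y y -> sing (y + x) ->
  X (y + x) \/ exists lam, forall w, W2 w -> b w (y + x) = lam * b w x.
Proof.
move=> Xx nYx Yy sp.
case: (classic (exists w, [/\ W2 w, w <> 0, b w x = 0 & b w (y + x) != 0])).
  case=> w [W2w nw wx wp]; left.
  exact: extension_shift Xx nYx Yy sp (W2Y W2w) nw (max_singular_sing M2 W2w) wx wp.
move=> no; right.
have [w0 W2w0 nz] := max_singular_nonorth M2 (X_sing Xx) (fun W2x => nYx (W2Y W2x)).
apply: (lfun_proportional (form_lfun x) (form_lfun (y + x)) vW2 W2w0 nz) => w W2w wx.
apply: NNPP => /eqP wp; apply: no; exists w; split => //.
by move=> w0'; move: wp; rewrite w0' form0l eqxx.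
Qed.

(* Compare the dichotomy for the decompositions y + x and (y - e) + (x + e),
   with e a point of W1 orthogonal to x: the two proportionality factors lead
   either to y + x in W2, or to e in W2, or to x in Y. *)
Lemma extension_step x y : X x -> ~ Y x -> Y y -> sing (y + x) -> X (y + x).
Proof.
move=> Xx nYx Yy sp.
have nz : y + x <> 0.
  by move=> yx0; apply: nYx; rewrite -(addKr y x) yx0 addr0; apply: vsubN.
have [//|[lam Hlam]] := extension_dichotomy Xx nYx Yy sp.
have [e [W1e ne ex]] := W1_kernel x.
have Xxe : X (x + e).
  exact: X_add Xx (X1 W1e ne) (free2C (free2_notin vY (W1Y W1e) nYx ne)) (form_symeq0 ex).
have nYxe : ~ Y (x + e).
  by move=> Yxe; apply: nYx; rewrite -(addrK e x); apply: vsubB => //; apply: W1Y.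
have Yye : Y (y - e) by apply: vsubB => //; apply: W1Y.
have split_e : (y - e) + (x + e) = y + x by rewrite addrACA addNr addr0.
have := extension_dichotomy Xxe nYxe Yye; rewrite split_e => /(_ sp) [//|[lam' Hlam']].
have key w : W2 w -> (lam - lam') * b w x = lam' * b w e.
  by move=> W2w; have := Hlam' w W2w; rewrite Hlam // formDr => h; rewrite mulrBl h; ring.
(* lam = lam': then y + x, or else e, is orthogonal to W2 *)
have [eql|neq] := eqVneq lam lam'.
  have [l0|nl] := eqVneq lam' 0.
    apply: X2 nz; apply: (max_singular_absorb M2 sp) => w W2w.
    by rewrite Hlam // eql l0 mul0r.
  exfalso; apply: ne; apply: (D12 W1e).
  apply: (max_singular_absorb M2 (max_singular_sing M1 W1e)) => w W2w.
  have /eqP := key w W2w; rewrite eql subrr mul0r eq_sym mulf_eq0.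
  by rewrite (negbTE nl) => /eqP.
(* lam != lam': x - sigma(k) e is orthogonal to W2, so x would lie in Y *)
have nd : lam - lam' != 0 by rewrite subr_eq0.
pose k := lam' / (lam - lam').
have W2x' : W2 ((- sg k) *: e + x).
  apply: (max_singular_absorb M2 (psingular_comb _ (max_singular_sing M1 W1e) (X_sing Xx) ex)).
  move=> w W2w; apply: (mulfI nd).
  by rewrite mulr0 formDr formZr sigmaN sigmaK mulrDr key // /k; field.
case: nYx; rewrite -(addKr ((- sg k) *: e) x).
by apply: (vsubD vY); [apply: (vsubN vY); apply: (vsubZ vY); exact: W1Y | exact: W2Y].
Qed.

Lemma saturated_extend x : X x -> saturated (vsum Y (vline x)).
Proof.
move=> Xx _ [y [_ [Yy [a ->] ->]]] nz sv.
case: (classic (Y x)) => [Yx|nYx].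
  by apply: satY => //; apply: vsubD => //; apply: vsubZ.
have [a0|na] := eqVneq a 0.
  by move: nz sv; rewrite a0 scale0r addr0; apply: satY.
have -> : y + a *: x = a *: (a^-1 *: y + x) by rewrite scalerDr scalerA divff // scale1r.
apply: X_scale; last exact: na.
apply: extension_step Xx nYx _ _; first exact: vsubZ.
have -> : a^-1 *: y + x = a^-1 *: (y + a *: x) by rewrite scalerDr scalerA mulVf // scale1r.
exact: psingular_scale.
Qed.

End Extension.

(* The base case for w1 in W1, w2 in W2 with d := b(w1, w2) != 0 (Hermitian).
   Take e in W1 orthogonal to w2 and g in W2 orthogonal to w1 but not to e, and
   put u := sc g + e with sc b(g, e) = -d.  Then v + c u is a point of X for
   every c with c sigma(c) = 1, and v := w1 + w2 lies on the line joining two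
   such points. *)
Section Twist.
Variables (w1 w2 e g : V) (sc : F).
Hypotheses (W1w1 : W1 w1) (W1e : W1 e) (W2w2 : W2 w2) (W2g : W2 g)
  (fr1e : free2 w1 e) (nw2 : w2 <> 0) (ng : g <> 0)
  (ew2 : b e w2 = 0) (gw1 : b g w1 = 0) (hsc : sc * b g e = - b w1 w2)
  (sv : sing (w1 + w2)).

(* v = w1 + w2 and u are independent: the W1-components w1, e are. *)
Lemma twist_free2 : free2 (w1 + w2) (sc *: g + e).
Proof.
move=> p r h; apply: fr1e.
apply: (disjoint_sum0 vW2 D12 _ _ (_ : _ + (p *: w2 + (r * sc) *: g) = 0)).
- by apply: vW1.2 => //; apply: vsubZ.
- by apply: vW2.2 => //; apply: vsubZ.
- by rewrite -h !scalerDr scalerA [(r * sc) *: g + _]addrC addrACA.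
Qed.

Lemma twist_trace : b w1 w2 + sg (b w1 w2) = 0.
Proof.
have := psingular_form sv; rewrite formDl !formDr (form_sym w1 w2).
by rewrite (max_singular_orth M1 W1w1 W1w1) (max_singular_orth M2 W2w2 W2w2) add0r addr0.
Qed.

Lemma twist_orth : b (w1 + w2) (sc *: g + e) = 0.
Proof.
rewrite formDl !formDr !formZr (max_singular_orth M1 W1w1 W1e) (max_singular_orth M2 W2w2 W2g).
by rewrite (form_symeq0 gw1) (form_symeq0 ew2) !(mulr0, addr0).
Qed.

Lemma twist_iso : b (sc *: g + e) (sc *: g + e) = 0.
Proof.
rewrite formDl !formDr !formZl !formZr.
rewrite (max_singular_orth M2 W2g W2g) (max_singular_orth M1 W1e W1e).
rewrite (form_sym g e) !mulr0 add0r addr0 -sigmaM hsc sigmaN -opprD.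
by rewrite twist_trace oppr0.
Qed.

(* For c sigma(c) = 1, v + c u = (w1 + c sc g) + (w2 + c e) is the sum of two
   orthogonal points of X, each on a line of X. *)
Lemma twist_point c : c * sg c = 1 -> X ((w1 + w2) + c *: (sc *: g + e)).
Proof.
move=> hc.
have nc : c != 0 by apply/eqP => c0; move: hc; rewrite c0 mul0r => /eqP; rewrite eq_sym oner_eq0.
have nw1 := free2_neq0 fr1e; have ne := free2_neq0 (free2C fr1e).
rewrite scalerDr scalerA addrACA; apply: X_add.
- rewrite -[w1]scale1r; apply: X_line; rewrite ?oner_eq0 //.
  + exact: X1.
  + exact: X2.
  + exact: free2_W12.
  + exact: form_symeq0.
- rewrite -[w2]scale1r; apply: X_line; rewrite ?oner_eq0 //.
  + exact: X2.
  + exact: X1.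
  + exact: free2C (free2_W12 W1e W2w2 ne nw2).
  + exact: form_symeq0.
- move=> p r h.
  have h' : (p *: w1 + (r * c) *: e) + ((p * (c * sc)) *: g + r *: w2) = 0.
    by rewrite -h !scalerDr !scalerA [r *: w2 + _]addrC addrACA.
  have [p0 rc0] := fr1e (disjoint_sum0 vW2 D12
    (vW1.2 _ _ _ W1w1 (vsubZ vW1 _ W1e)) (vW2.2 _ _ _ W2g (vsubZ vW2 _ W2w2)) h').
  by split=> //; move/eqP: rc0; rewrite mulf_eq0 (negbTE nc) orbF => /eqP.
- rewrite formDl !formDr !formZl !formZr (max_singular_orth M1 W1w1 W1e).
  rewrite (max_singular_orth M2 W2g W2w2).
  rewrite (_ : _ + _ = b w1 w2 + c * sg c * (sc * b g e)); last by ring.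
  by rewrite hc mul1r hsc subrr.
Qed.

(* sigma is non-trivial, so some c0 != 1 has c0 sigma(c0) = 1. *)
Lemma twist_base a0 : sg a0 != a0 -> X (w1 + w2).
Proof.
move=> na0.
have a0n : a0 != 0 by apply: contra na0 => /eqP ->; rewrite sigma0.
have sa0n : sg a0 != 0 by rewrite sigma_eq0.
pose c0 := a0 / sg a0.
have hc0 : c0 * sg c0 = 1 by rewrite /c0 sigmaM sigmaV sigmaK; field; rewrite sa0n a0n.
have c01 : c0 != 1.
  by apply: contra na0 => /eqP h; rewrite -[X in _ == X](divfK sa0n) -/c0 h mul1r.
have h1 : 1 * sg 1 = 1 by rewrite sigma1 mulr1.
have := twist_point h1; rewrite scale1r => Xvu.
rewrite (shear_decomp (w1 + w2) (sc *: g + e) c01).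
apply: X_line Xvu (twist_point hc0) (free2_shear twist_free2 c01) _ _.
  exact: form_shear_orth (psingular_form sv) twist_orth twist_iso.
by apply/orP; right; rewrite mul1r invr_eq0 subr_eq0 eq_sym.
Qed.

End Twist.

Lemma saturated_W12 : saturated (vsum W1 W2).
Proof.
move=> _ [w1 [w2 [W1w1 W2w2 ->]]] nz sv.
have [w10|/eqP nw1] := eqVneq w1 0; first by move: nz; rewrite w10 add0r; exact: X2.
have [w20|/eqP nw2] := eqVneq w2 0; first by move: nz; rewrite w20 addr0; exact: X1.
have Xw1 := X1 W1w1 nw1; have Xw2 := X2 W2w2 nw2.
have fr := free2_W12 W1w1 W2w2 nw1 nw2.
have [o|[a0 /eqP na0]] :=
  psingular_sum (max_singular_sing M1 W1w1) (max_singular_sing M2 W2w2) sv.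
  exact: X_add.
have [o|d0] := eqVneq (b w1 w2) 0; first exact: X_add.
(* Hermitian case with b(w1, w2) != 0: build e and g for [twist_base] *)
have [e [W1e ne ew2]] := W1_kernel w2.
have fr1e : free2 w1 e := lfun_free2 (form_lfun w2) d0 ew2 ne.
have [g [W2g gw1 ge]] := W2_separates W1w1 W1e fr1e.
have ng : g <> 0 by move=> g0; move: ge; rewrite g0 form0l eqxx.
apply: (twist_base (sc := - b w1 w2 / b g e) W1w1 W1e W2w2 W2g fr1e nw2 ng ew2 gw1 _ sv na0).
by rewrite divfK.
Qed.

Lemma saturated_span k (c : 'I_k -> F) (x : 'I_k -> V) : (forall i, X (x i)) ->
  exists Y, [/\ is_vsub Y, saturated Y, (forall v, W1 v -> Y v),
    (forall v, W2 v -> Y v) & Y (\sum_(i < k) c i *: x i)].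
Proof.
elim: k c x => [|k IH] c x Xx.
  exists (vsum W1 W2); split.
  - exact: vsum_vsub.
  - exact: saturated_W12.
  - by move=> v; apply: vsuml.
  - by move=> v; apply: vsumr.
  - by rewrite big_ord0; apply: vsuml (vsub0 vW1).
pose c' i := c (widen_ord (leqnSn k) i); pose x' i := x (widen_ord (leqnSn k) i).
have [Y [vY satY W1Y W2Y Ys]] := IH c' x' (fun i => Xx _).
exists (vsum Y (vline (x ord_max))); split.
- exact: vsum_vsub vY (vline_vsub _).
- exact: (saturated_extend vY satY W1Y W2Y (Xx _)).
- by move=> v /W1Y; apply: vsuml (vline_vsub _).
- by move=> v /W2Y; apply: vsuml (vline_vsub _).
- rewrite big_ord_recr; exists (\sum_(i < k) c' i *: x' i), (c ord_max *: x ord_max).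
  by split=> //; exists (c ord_max).
Qed.

End NiceSubspace.
End PolarForm.

Unset Implicit Arguments.
Set Strict Implicit.

(* The rank n >= 2 provides two independent vectors in a totally singular
   subspace, hence in W1; every combination v of points of X then lies in a
   saturated subspace, so v is in X as soon as it is singular. *)
Theorem lemma2 (F : fieldType) (V : lmodType F) (phi : pform V) (n : nat)
  (X : V -> Prop) :
  is_pform phi -> pform_nondeg phi -> witt_index phi n -> (2 <= n)%N ->
  ~ (is_quad phi /\ n = 2%N /\ has_dim (fun _ : V => True) 4) ->
  nice_subspace phi X ->
  forall v : V, v <> 0 -> ((lspan X v /\ psingular phi v) <-> X v).
Proof.
move=> Hphi _ [[W [vW [tsW [xb [li spanW]]]]] _] n2 _ [HX [W1 [W2 [M1 M2 D12 X1 X2]]]] v nv.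
split=> [[[k [c [x [Xx ev]]]] sv] | Xv]; last first.
  split; first by exists 1%N, (fun=> 1), (fun=> v); rewrite big_ord1 scale1r.
  exact: (X_sing HX Xv).
subst v.
have Wxb i : W (xb i).
  apply/spanW; exists 1%N, (fun=> 1), (fun=> xb i); rewrite big_ord1 scale1r.
  by split=> // _; exists i.
have fr : free2 (xb (Ordinal (ltnW n2))) (xb (Ordinal n2)) by apply: lin_indep_free2.
have [e1 [e2 [W1e1 W1e2 fr12]]] := max_singular_free2 Hphi M1 vW tsW (Wxb _) (Wxb _) fr.
have [Y [_ satY _ _ Yv]] := saturated_span Hphi HX M1 M2 D12 X1 X2 W1e1 W1e2 fr12 c Xx.
exact: satY _ Yv nv sv.
Qed.
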